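(* For every $N_0\in\mathbb{N}$ there exists an instance of the binary voting game (as described in the context) with $N>N_0$ agents in which no strong Bayes Nash Equilibrium exists, i.e. no strategy profile is a $0$-strong Bayes Nash Equilibrium.
   Context: Binary voting game. $N$ agents each vote for one of two alternatives $\mathbf{A}$ or $\mathbf{R}$. There is an unobserved world state $W\in\{L,H\}$ with common prior $P_L=\Pr[W=L]>0$, $P_H=\Pr[W=H]>0$. Conditional on $W$, each agent $n$ independently receives a private signal $S_n\in\{l,h\}$ with $P_{sw}=\Pr[S_n=s\mid W=w]$ (identical across agents), where $P_{hH}>P_{hL}$ and $P_{lH}<P_{lL}$. For a threshold $\mu\in(0,1)$, $\mathbf{A}$ wins iff at least $\mu N$ agents vote for $\mathbf{A}$; otherwise $\mathbf{R}$ wins. Each agent $n$ has a utility $v_n:\{L,H\}\times\{\mathbf{A},\mathbf{R}\}\to\{0,1,\dots,B\}$ ($B$ a positive integer) with $v_n(H,\mathbf{A})>v_n(L,\mathbf{A})$ and $v_n(H,\mathbf{R})<v_n(L,\mathbf{R})$. A (mixed) strategy of an agent is a map from her signal to a distribution over $\{\mathbf{A},\mathbf{R}\}$, written $\sigma=(\beta_l,\beta_h)$ where $\beta_s$ is the probability of voting $\mathbf{A}$ on signal $s$; a strategy profile is $\Sigma=(\sigma_1,\dots,\sigma_N)$. Let $\lambda^{\mathbf{A}}_w(\Sigma)$, $\lambda^{\mathbf{R}}_w(\Sigma)$ be the (ex-ante) probabilities that $\mathbf{A}$, resp. $\mathbf{R}$, wins when the state is $w$. The ex-ante expected utility of agent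 $n$ is $u_n(\Sigma)=\sum_{w\in\{L,H\}}P_w\big(\lambda^{\mathbf{A}}_w(\Sigma)v_n(w,\mathbf{A})+\lambda^{\mathbf{R}}_w(\Sigma)v_n(w,\mathbf{R})\big)$. A profile $\Sigma$ is an $\varepsilon$-strong Bayes Nash Equilibrium if there is no set $D$ of agents and profile $\Sigma'$ such that $\sigma'_n=\sigma_n$ for all $n\notin D$, $u_n(\Sigma')\ge u_n(\Sigma)$ for all $n\in D$, and $u_n(\Sigma')>u_n(\Sigma)+\varepsilon$ for some $n\in D$. A strong Bayes Nash Equilibrium is a $0$-strong Bayes Nash Equilibrium. *)

From HB Require Import structures.
From mathcomp Require Import all_boot all_order all_algebra.
From mathcomp Require Import reals.
Set Implicit Arguments. Unset Strict Implicit. Unset Printing Implicit Defensive.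
Import Order.TTheory GRing.Theory Num.Theory.
Local Open Scope ring_scope.

Inductive world := L | H.
Inductive signal := sl | sh.
Inductive alt := AltA | AltR.

Record game (R : realType) := Game {
  N : nat;
  PL : R;  PH : R;
  Psig : signal -> world -> R;          (* Psig s w = Pr[S_n = s | W = w] *)
  mu : R;
  B : nat;
  v : 'I_N -> world -> alt -> nat;
  PL_pos : 0 < PL;
  PH_pos : 0 < PH;
  prior_sum : PL + PH = 1;
  Psig_ge0 : forall s w, 0 <= Psig s w;
  Psig_sum : forall w, Psig sl w + Psig sh w = 1;
  Psig_h : Psig sh L < Psig sh H;
  Psig_l : Psig sl H < Psig sl L;
  mu_pos : 0 < mu;
  mu_lt1 : mu < 1;
  B_pos : (0 < B)%N;
  v_le_B : forall n w a, (v n w a <= B)%N;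
  v_A : forall n, (v n L AltA < v n H AltA)%N;
  v_R : forall n, (v n H AltR < v n L AltR)%N
}.

Definition prior (R : realType) (G : game R) (w : world) : R :=
  match w with L => PL G | H => PH G end.

(* A mixed strategy (beta_l, beta_h): probabilities of voting A on signal l, h. *)
Definition strategy (R : realType) := (R * R)%type.
Definition valid_strategy (R : realType) (s : strategy R) : Prop :=
  0 <= s.1 <= 1 /\ 0 <= s.2 <= 1.

Definition profile (R : realType) (G : game R) := 'I_(N G) -> strategy R.
Definition valid_profile (R : realType) (G : game R) (S : profile G) : Prop :=
  forall n, valid_strategy (S n).

Definition voteA (R : realType) (G : game R) (S : profile G) (n : 'I_(N G))
  (w : world) : R :=
  Psig G sl w * (S n).1 + Psig G sh w * (S n).2.

Definition prob_set (R : realType) (G : game R) (S : profile G)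
  (T : {set 'I_(N G)}) (w : world) : R :=
  (\prod_(n in T) voteA S n w) * (\prod_(n in ~: T) (1 - voteA S n w)).

Definition lambdaA (R : realType) (G : game R) (S : profile G) (w : world) : R :=
  \sum_(T : {set 'I_(N G)} | mu G * (N G)%:R <= #|T|%:R) prob_set S T w.
Definition lambdaR (R : realType) (G : game R) (S : profile G) (w : world) : R :=
  \sum_(T : {set 'I_(N G)} | ~~ (mu G * (N G)%:R <= #|T|%:R)) prob_set S T w.

Definition utility (R : realType) (G : game R) (S : profile G) (n : 'I_(N G)) : R :=
  let term w := prior G w * (lambdaA S w * (v n w AltA)%:R
                             + lambdaR S w * (v n w AltR)%:R) in
  term L + term H.

Definition eps_strong_BNE (R : realType) (G : game R) (eps : R) (S : profile G)
  : Prop :=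
  ~ exists (D : {set 'I_(N G)}) (S' : profile G),
      [/\ valid_profile S',
          (forall n, n \notin D -> S' n = S n),
          (forall n, n \in D -> utility S n <= utility S' n) &
          (exists2 n, n \in D & utility S n + eps < utility S' n)].

Definition strong_BNE (R : realType) (G : game R) (S : profile G) : Prop :=
  eps_strong_BNE 0 S.

(* In the example game the signals reveal the state, the prior is uniform and
   A wins iff at least two agents vote for it.  Agent 0 prefers A in both
   states, agent 1 wants A exactly in state H, and every other agent prefers A
   in state H and is indifferent in state L.  Since signal l is only received
   in state L, changing the votes on signal l changes the outcome in state L
   only.  So if A does not surely win in state L, all agents but agent 1 vote A
   on signal l: A now surely wins in L, agent 0 strictly gains and nobody else
   loses.  If A surely wins in state L, all agents but agent 0 vote R on signal
   l: R now surely wins in L and agent 1 strictly gains. *)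
From HB Require Import structures.
From mathcomp Require Import all_boot all_order all_algebra.
From mathcomp Require Import reals.
From mathcomp Require Import ring lra.
Set Implicit Arguments. Unset Strict Implicit. Unset Printing Implicit Defensive.
Import Order.TTheory GRing.Theory Num.Theory.
Local Open Scope ring_scope.

Section VotingGame.
Variables (R : realType) (G : game R).
Implicit Types (S : profile G) (w : world).

Lemma sum_prob_set S w : \sum_(T : {set 'I_(N G)}) prob_set S T w = 1.
Proof.
have distr : \prod_n (voteA S n w + (1 - voteA S n w)) =
    \sum_(T : {set 'I_(N G)})
      \prod_n (if n \in T then voteA S n w else 1 - voteA S n w).
  exact: bigA_distr.
move: distr; rewrite (eq_bigr (fun=> 1)) => [|n _]; last by rewrite addrC subrK.
rewrite big1_eq => ->; apply: eq_bigr => T _.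
rewrite /prob_set [RHS](bigID (mem T)) /=; congr (_ * _).
  by apply: eq_bigr => n ->.
by apply: eq_big => n; rewrite ?inE // => /negbTE ->.
Qed.

Lemma lambdaA_add_lambdaR S w : lambdaA S w + lambdaR S w = 1.
Proof.
by rewrite -(sum_prob_set S w) [RHS](bigID (fun T : {set _} => mu G * (N G)%:R <= #|T|%:R)).
Qed.

Lemma eq_prob_set {S S' w} :
  (forall n, voteA S' n w = voteA S n w) -> forall T, prob_set S' T w = prob_set S T w.
Proof. by move=> eqS T; rewrite /prob_set; congr (_ * _); apply: eq_bigr => n _; rewrite eqS. Qed.

Lemma eq_lambdaA {S S' w} :
  (forall n, voteA S' n w = voteA S n w) -> lambdaA S' w = lambdaA S w.
Proof. by move=> eqS; apply: eq_bigr => T _; exact: eq_prob_set. Qed.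

Lemma eq_lambdaR {S S' w} :
  (forall n, voteA S' n w = voteA S n w) -> lambdaR S' w = lambdaR S w.
Proof. by move=> eqS; apply: eq_bigr => T _; exact: eq_prob_set. Qed.

Lemma lambdaR_eq0 S w (M : {set 'I_(N G)}) :
  mu G * (N G)%:R <= #|~: M|%:R -> (forall n, n \notin M -> voteA S n w = 1) ->
  lambdaR S w = 0.
Proof.
move=> quota sureA; apply: big1 => T lostT.
have /subsetPn[n nM nT] : ~~ (~: M \subset T).
  apply: contra lostT => /subset_leq_card leMT.
  by rewrite (le_trans quota) // ler_nat.
rewrite /prob_set [X in _ * X](bigD1 n) ?inE //=.
by rewrite sureA -?in_setC // subrr mul0r mulr0.
Qed.

Lemma lambdaA_eq0 S w (M : {set 'I_(N G)}) :
  #|M|%:R < mu G * (N G)%:R -> (forall n, n \notin M -> voteA S n w = 0) ->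
  lambdaA S w = 0.
Proof.
move=> quota sureR; apply: big1 => T wonT.
have /subsetPn[n nT nM] : ~~ (T \subset M).
  apply: contraTN wonT => /subset_leq_card leTM.
  by rewrite -ltNge (le_lt_trans _ quota) // ler_nat.
by rewrite /prob_set (bigD1 n) //= sureR // !mul0r.
Qed.

Lemma utility_sub_same_H S S' n :
  (forall m, voteA S' m H = voteA S m H) ->
  utility S' n - utility S n =
    PL G * (lambdaA S' L - lambdaA S L) * ((v n L AltA)%:R - (v n L AltR)%:R).
Proof.
move=> eqH; rewrite /utility /= (eq_lambdaA eqH) (eq_lambdaR eqH).
have := lambdaA_add_lambdaR S L; have := lambdaA_add_lambdaR S' L.
move=> /(canRL (addKr _)) -> /(canRL (addKr _)) ->; ring.
Qed.

Lemma not_strong_BNE S S' (D : {set 'I_(N G)}) :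
  valid_profile S' -> (forall n, n \notin D -> S' n = S n) ->
  (forall n, n \in D -> utility S n <= utility S' n) ->
  (exists2 n, n \in D & utility S n < utility S' n) -> ~ strong_BNE S.
Proof.
move=> validS' outD geD [n nD ltn]; apply; exists D, S'; split => //.
by exists n; rewrite ?addr0.
Qed.

Definition vote_l_except S (k : 'I_(N G)) (x : R) : profile G :=
  fun n => if n == k then S n else (x, (S n).2).

Lemma valid_vote_l_except S k x :
  valid_profile S -> 0 <= x <= 1 -> valid_profile (vote_l_except S k x).
Proof. by move=> validS x01 n; rewrite /vote_l_except; case: eqP => // _; have [] := validS n. Qed.

Lemma vote_l_except_notin S k x n : n \notin ~: [set k] -> vote_l_except S k x n = S n.
Proof. by rewrite !inE negbK /vote_l_except => ->. Qed.

End VotingGame.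

Definition revealing_signal (R : realType) (s : signal) (w : world) : R :=
  match s, w with sl, L | sh, H => 1 | _, _ => 0 end.

Definition example_payoff (i : nat) (w : world) (a : alt) : nat :=
  match i, w, a with
  | 0, L, AltA => 2 | 0, H, AltA => 3 | 0, L, AltR => 1 | 0, H, AltR => 0
  | 1, L, AltA => 0 | 1, H, AltA => 1 | 1, L, AltR => 1 | 1, H, AltR => 0
  | _, L, AltA => 1 | _, H, AltA => 2 | _, L, AltR => 1 | _, H, AltR => 0
  end.

Section ExampleGame.
Variables (R : realType) (N0 : nat).

Fact half_gt0 : 0 < 2^-1 :> R. Proof. lra. Qed.
Fact half_add_half : 2^-1 + 2^-1 = 1 :> R. Proof. lra. Qed.
Fact revealing_signal_ge0 s w : 0 <= revealing_signal R s w.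
Proof. by case: s; case: w. Qed.
Fact revealing_signal_sum w : revealing_signal R sl w + revealing_signal R sh w = 1.
Proof. by case: w; rewrite /= ?addr0 ?add0r. Qed.
Fact revealing_signal_h : revealing_signal R sh L < revealing_signal R sh H.
Proof. exact: ltr01. Qed.
Fact revealing_signal_l : revealing_signal R sl H < revealing_signal R sl L.
Proof. exact: ltr01. Qed.
Fact two_quota_gt0 : 0 < 2 / (N0.+3)%:R :> R.
Proof. by rewrite divr_gt0 // ltr0n. Qed.
Fact two_quota_lt1 : 2 / (N0.+3)%:R < 1 :> R.
Proof. by rewrite ltr_pdivrMr ?ltr0n // mul1r ltr_nat. Qed.
Fact example_payoff_le3 (n : 'I_N0.+3) w a : (example_payoff n w a <= 3)%N.
Proof. by case: n => -[|[|i]] ? /=; case: w; case: a. Qed.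
Fact example_payoff_A (n : 'I_N0.+3) : (example_payoff n L AltA < example_payoff n H AltA)%N.
Proof. by case: n => -[|[|i]]. Qed.
Fact example_payoff_R (n : 'I_N0.+3) : (example_payoff n H AltR < example_payoff n L AltR)%N.
Proof. by case: n => -[|[|i]]. Qed.

Definition example_game : game R :=
  Game half_gt0 half_gt0 half_add_half revealing_signal_ge0 revealing_signal_sum
    revealing_signal_h revealing_signal_l two_quota_gt0 two_quota_lt1 (isT : 0 < 3)%N
    example_payoff_le3 example_payoff_A example_payoff_R.

Local Notation G := example_game.
Implicit Types (S : profile G).

Lemma example_quotaE (k : nat) : (mu G * (N G)%:R <= k%:R) = (2 <= k)%N.
Proof. by rewrite /= divfK ?pnatr_eq0 // ler_nat. Qed.

Lemma example_voteA_L S n : voteA S n L = (S n).1.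
Proof. by rewrite /voteA /= mul1r mul0r addr0. Qed.

Lemma example_voteA_H S n : voteA S n H = (S n).2.
Proof. by rewrite /voteA /= mul1r mul0r add0r. Qed.

Lemma lambdaA_L_vote_l_except1 S k : lambdaA (vote_l_except S k 1) L = 1.
Proof.
have sureA : lambdaR (vote_l_except S k 1) L = 0.
  apply: (@lambdaR_eq0 _ _ _ _ [set k]).
    by rewrite example_quotaE cardsC1 card_ord.
  by move=> n; rewrite inE example_voteA_L /vote_l_except => /negbTE ->.
by have := lambdaA_add_lambdaR (vote_l_except S k 1) L; rewrite sureA addr0.
Qed.

Lemma lambdaA_L_vote_l_except0 S k : lambdaA (vote_l_except S k 0) L = 0.
Proof.
apply: (@lambdaA_eq0 _ _ _ _ [set k]); first by rewrite ltNge example_quotaE cards1.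
by move=> n; rewrite inE example_voteA_L /vote_l_except => /negbTE ->.
Qed.

Lemma utility_sub_vote_l_except S k x n :
  utility (vote_l_except S k x) n - utility S n =
    2^-1 * (lambdaA (vote_l_except S k x) L - lambdaA S L)
    * ((example_payoff n L AltA)%:R - (example_payoff n L AltR)%:R).
Proof.
apply: utility_sub_same_H => m.
by rewrite !example_voteA_H /vote_l_except; case: eqP.
Qed.

Lemma vote_l_except_not_strong_BNE S k x (j : 'I_(N G)) :
  valid_profile S -> 0 <= x <= 1 ->
  let gain n := (lambdaA (vote_l_except S k x) L - lambdaA S L)
                * ((example_payoff n L AltA)%:R - (example_payoff n L AltR)%:R) in
  (forall n, n != k -> 0 <= gain n) -> j != k -> 0 < gain j -> ~ strong_BNE S.
Proof.
move=> validS x01 gain ge0 jk gtj.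
have gainE n : utility (vote_l_except S k x) n = utility S n + 2^-1 * gain n.
  by have := utility_sub_vote_l_except S k x n; rewrite -mulrA => <-; rewrite addrC subrK.
apply: (@not_strong_BNE _ _ _ (vote_l_except S k x) (~: [set k])).
- exact: valid_vote_l_except.
- exact: vote_l_except_notin.
- by move=> n /[!inE] /ge0 gain_ge0; rewrite gainE lerDl mulr_ge0 ?invr_ge0 ?ler0n.
- by exists j; rewrite ?inE // gainE ltrDl mulr_gt0 ?invr_gt0 ?ltr0n.
Qed.

End ExampleGame.

Theorem theorem1 (R : realType) (N0 : nat) :
  exists G : game R, (N0 < N G)%N /\
    forall S : profile G, valid_profile S -> ~ strong_BNE S.
Proof.
exists (example_game R N0); split=> [/=|S validS]; first by rewrite ltnS leqW.
pose agent0 : 'I_N0.+3 := ord0.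
pose agent1 : 'I_N0.+3 := Ordinal (isT : 1 < N0.+3)%N.
have [ltA1|geA1] := ltrP (lambdaA S L) 1.
- apply: (@vote_l_except_not_strong_BNE _ _ _ agent1 1 agent0 validS);
    rewrite ?lambdaA_L_vote_l_except1 ?ler01 ?lexx //=.
  + by move=> [[|[|i]] ?] //= _; lra.
  + lra.
- apply: (@vote_l_except_not_strong_BNE _ _ _ agent0 0 agent1 validS);
    rewrite ?lambdaA_L_vote_l_except0 ?ler01 ?lexx //=.
  + by move=> [[|[|i]] ?] //= _; lra.
  + lra.
Qed.
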